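(* Let $H$ be a graph, let $G$ be a connected graph, and let $((H^{\Phi},\Phi);(T,\mathcal{X}))$ be an $H$-profile of $G$. Then there exists $t \in V(T)$ such that the set $\bigcup_{x \in \mathcal{X}(t)} V_x$ is a longest path transversal of $G$.
   Context: All graphs are finite and simple. A subdivision $H'$ of $H$ is obtained by replacing each edge $xy$ of $H$ by a path from $x$ to $y$ of length at least one, with the interiors of these paths pairwise disjoint and anticomplete. An $H$-representation of $G$ is a pair $(H^{\Phi},\Phi)$ where $H^{\Phi}$ is a subdivision of $H$ and $\Phi: V(G)\to 2^{V(H^{\Phi})}$ is such that each $H^{\Phi}[\Phi(v)]$ is connected and, for distinct $u,v\in V(G)$, $uv\in E(G)$ iff $\Phi(u)\cap\Phi(v)\neq\emptyset$. It is nice if every vertex of $H^{\Phi}$ lies in some $\Phi(v)$ and for every edge $xy$ of $H^{\Phi}$ some $\Phi(v)$ contains both $x$ and $y$. A tree decomposition of a graph $F$ is a pair $(T,\mathcal{X})$ with $T$ a tree and $\mathcal{X}:V(T)\to 2^{V(F)}$ such that every vertex of $F$ lies in some bag, every edge of $F$ has both ends in some bag, and for each vertex $v$ of $F$ the set $\{t: v\in\mathcal{X}(t)\}$ induces a nonempty connected subtree of $T$. An $H$-profile of $G$ is a tuple $((H^{\Phi},\Phi);(T,\mathcal{X}))$ where $(H^{\Phi},\Phi)$ is a nice $H$-representation of $G$ and $(T,\mathcal{X})$ is a tree decomposition of $H^{\Phi}$. For $x\in V(H^{\Phi})$, $V_x=\{v\in V(G): x\in\Phi(v)\}$. A longest path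 of $G$ is a path of maximum length in $G$; a longest path transversal is a set of vertices of $G$ meeting every longest path. *)

From mathcomp Require Import all_boot.
Set Implicit Arguments. Unset Strict Implicit. Unset Printing Implicit Defensive.

Record sgraph := SGraph {
  gvert :> finType;
  adj : rel gvert;
  adj_sym : symmetric adj;
  adj_irr : irreflexive adj }.

Definition connected_in (G : sgraph) (A : {set G}) : Prop :=
  A != set0 /\
  forall a b, a \in A -> b \in A ->
    connect [rel u v | [&& adj u v, u \in A & v \in A]] a b.

Definition connected_graph (G : sgraph) : Prop := connected_in [set: G].

Definition is_tree (T : sgraph) : Prop :=
  connected_graph T /\
  ~ (exists c : seq T, [/\ 3 <= size c, uniq c & cycle (@adj T) c]).

Definition consec (A : eqType) (s : seq A) (a b : A) : bool :=
  (a, b) \in zip s (behead s).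

(* S is a subdivision of H: branch vertices f x (f injective); for every
   (ordered) edge xy of H a sequence P x y of interior vertices, so that
   f x :: P x y ++ [:: f y] is the path replacing xy; P y x = rev (P x y);
   interiors are duplicate-free, avoid branch vertices, and are pairwise
   disjoint for distinct edges; every vertex of S is a branch vertex or
   interior vertex; the edges of S are exactly the consecutive pairs of
   the replacing paths (hence interiors are pairwise anticomplete). *)
Definition edge_path (H S : sgraph) (f : H -> S) (P : H -> H -> seq S)
  (x y : H) : seq S := f x :: P x y ++ [:: f y].

Definition is_subdivision (S H : sgraph) : Prop :=
  exists (f : H -> S) (P : H -> H -> seq S),
  injective f /\
  (forall x y, adj x y -> P y x = rev (P x y)) /\
  (forall x y, adj x y -> uniq (P x y)) /\
  (forall x y z, adj x y -> f z \notin P x y) /\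
  (forall x y u v, adj x y -> adj u v ->
     ~ ((u == x) && (v == y) || (u == y) && (v == x)) ->
     forall a, a \in P x y -> a \notin P u v) /\
  (forall a : S, (exists z, a = f z) \/
                 (exists x y, adj x y /\ a \in P x y)) /\
  (forall a b : S, adj a b <->
     exists x y, adj x y /\ consec (edge_path f P x y) a b).

Definition representation (H G S : sgraph) (Phi : G -> {set S}) : Prop :=
  [/\ is_subdivision S H,
      forall v, connected_in (Phi v) &
      forall u v, u != v -> (adj u v <-> Phi u :&: Phi v != set0)].

Definition nice_representation (H G S : sgraph) (Phi : G -> {set S}) : Prop :=
  [/\ representation H Phi,
      forall a : S, exists v, a \in Phi v &
      forall a b : S, adj a b -> exists v, (a \in Phi v) && (b \in Phi v)].

Definition tree_decomposition (S T : sgraph) (X : T -> {set S}) : Prop :=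
  [/\ is_tree T,
      forall a : S, exists t, a \in X t,
      forall a b : S, adj a b -> exists t, (a \in X t) && (b \in X t) &
      forall a : S, connected_in [set t | a \in X t]].

Definition H_profile (H G S T : sgraph) (Phi : G -> {set S})
  (X : T -> {set S}) : Prop :=
  nice_representation H Phi /\ tree_decomposition X.

Definition Vx (G S : sgraph) (Phi : G -> {set S}) (x : S) : {set G} :=
  [set v | x \in Phi v].

(* paths in G: nonempty duplicate-free vertex sequences with consecutive
   vertices adjacent; length = number of edges = size - 1 *)
Definition is_gpath (G : sgraph) (p : seq G) : bool :=
  if p is a :: q then uniq p && path (@adj G) a q else false.

Definition longest_path (G : sgraph) (p : seq G) : Prop :=
  is_gpath p /\ forall q : seq G, is_gpath q -> size q <= size p.

Definition lp_transversal (G : sgraph) (A : {set G}) : Prop :=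
  forall p, longest_path p -> has (fun v => v \in A) p.

From mathcomp Require Import all_boot zify.
From Stdlib Require Import Classical.
Set Implicit Arguments. Unset Strict Implicit. Unset Printing Implicit Defensive.

(* For a longest path P of G, let T_P be the set of nodes of T whose bag meets
   the union of the Phi v, v in P.  Adjacent vertices have intersecting
   connected models, so this union is connected, and the nodes whose bags meet
   a connected set form a subtree.  Two longest paths of a connected graph
   share a vertex: otherwise a segment joining them, together with the longer
   halves of both, would be a longer path.  So the subtrees T_P pairwise
   intersect, and by the Helly property of subtrees (proved by deleting a leaf)
   some node t lies in all of them; the V_x with x in X t then cover a vertex
   of every longest path. *)

Definition adj_in (G : sgraph) (A : {set G}) : rel G :=
  [rel u v | [&& adj u v, u \in A & v \in A]].

Lemma adj_neq (G : sgraph) (u v : G) : adj u v -> u != v.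
Proof. by apply: contraTneq => ->; rewrite adj_irr. Qed.

Lemma connect_uniq_path (T : finType) (e : rel T) x y : connect e x y ->
  exists p, [/\ path e x p, y = last x p & uniq (x :: p)].
Proof.
move/connectP=> [p e_p ->]; case: (shortenP e_p) => p' e_p' u_p' _.
by exists p'.
Qed.

Section InducedConnectivity.
Variable G : sgraph.
Implicit Types A B : {set G}.

Lemma connect_adj_in_sub A B x y : A \subset B ->
  connect (adj_in A) x y -> connect (adj_in B) x y.
Proof.
move=> sAB; apply: connect_sub => u v /and3P[uv uA vA]; apply: connect1.
by rewrite /adj_in /= uv !(subsetP sAB).
Qed.

Lemma connected_in_connect A B x y : A \subset B ->
  connected_in A -> x \in A -> y \in A -> connect (adj_in B) x y.
Proof. by move=> sAB [_ cA] xA yA; apply: connect_adj_in_sub sAB (cA _ _ xA yA). Qed.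

Lemma connected_inU A B z : connected_in A -> connected_in B ->
  z \in A -> z \in B -> connected_in (A :|: B).
Proof.
move=> cA cB zA zB; split; first by apply/set0Pn; exists z; rewrite inE zA.
have via_z a : a \in A :|: B ->
    connect (adj_in (A :|: B)) a z /\ connect (adj_in (A :|: B)) z a.
  rewrite inE => /orP[aA|aB].
    by split; apply: connected_in_connect (subsetUl A B) cA _ _.
  by split; apply: connected_in_connect (subsetUr A B) cB _ _.
by move=> a b /via_z[az _] /via_z[_ zb]; apply: connect_trans az zb.
Qed.

End InducedConnectivity.

Section SubtreeHelly.
Variable T : sgraph.
Implicit Types (A B C : {set T}) (l p x y : T).

Definition acyclic : Prop :=
  ~ exists c : seq T, [/\ 3 <= size c, uniq c & cycle (@adj T) c].

Definition leaf_in A l p : Prop :=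
  [/\ l \in A, p \in A, adj l p & forall q, q \in A -> adj l q -> q = p].

Lemma acyclic_path_chord x r1 r y : acyclic -> path (@adj T) x (r1 :: r) ->
  uniq (x :: r1 :: r) -> adj x y -> y \notin r.
Proof.
move=> acyT xr ur xy; apply/negP => yr; case/splitPr: yr xr ur => p1 p2 xr ur.
apply: acyT; exists (x :: r1 :: rcons p1 y); split.
- by rewrite /= size_rcons.
- by apply: subseq_uniq ur; rewrite -cat_rcons -!cat_cons prefix_subseq.
- move: xr; rewrite -cat_rcons -cat_cons cat_path => /andP[xr _].
  by rewrite /= rcons_path last_rcons andbA -/(path _ x (r1 :: _)) xr adj_sym.
Qed.

Lemma leafless_path_extend A x r1 r : acyclic ->
  ~ (exists l p, leaf_in A l p) ->
  path (@adj T) x (r1 :: r) -> uniq (x :: r1 :: r) ->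
  {subset x :: r1 :: r <= A} ->
  exists2 y, y \in A & adj y x && (y \notin x :: r1 :: r).
Proof.
move=> acyT noleaf xr ur sA.
have xA : x \in A by apply: sA; rewrite mem_head.
have r1A : r1 \in A by apply: sA; rewrite !inE eqxx orbT.
have xr1 : adj x r1 by case/andP: xr.
have [y yA /andP[xy yr1]] : exists2 y, y \in A & adj x y && (y != r1).
  apply: NNPP => noy; apply: noleaf; exists x, r1; split=> // q qA xq.
  by apply: NNPP => qr1; apply: noy; exists q => //; rewrite xq; apply/eqP.
have yx : y != x by rewrite eq_sym adj_neq.
exists y => //; rewrite adj_sym xy !inE negb_or yx (negbTE yr1) /=.
exact: acyclic_path_chord acyT xr ur xy.
Qed.

Lemma connected_in_edge A : connected_in A -> 1 < #|A| ->
  exists x y, [/\ x \in A, y \in A & adj x y].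
Proof.
move=> [_ cA] /card_gt1P[a [b [aA bA ab]]].
case/connectP: (cA _ _ aA bA) => [[|c q] /= ac_q bE]; first by rewrite bE eqxx in ab.
by case/andP: ac_q => /and3P[ac _ cA'] _; exists a, c.
Qed.

Lemma leaf_exists A : acyclic -> connected_in A -> 1 < #|A| ->
  exists l p, leaf_in A l p.
Proof.
move=> acyT cA A_gt1; apply: NNPP => noleaf.
have long k : exists x r1 r, [/\ path (@adj T) x (r1 :: r),
    uniq (x :: r1 :: r), {subset x :: r1 :: r <= A} & size r = k].
  elim: k => [|k [x [r1 [r [xr ur sA <-]]]]].
    have [x [y [xA yA xy]]] := connected_in_edge cA A_gt1.
    exists x, y, [::]; split=> //=; first by rewrite xy.
      by rewrite inE andbT adj_neq.
    by move=> v; rewrite !inE => /orP[] /eqP->.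
  have [y yA /andP[yx yn]] := leafless_path_extend acyT noleaf xr ur sA.
  exists y, x, (r1 :: r); split=> //=; first by rewrite yx.
    by rewrite yn.
  by move=> v; rewrite inE => /orP[/eqP-> //|]; apply: sA.
have [x [r1 [r [_ ur sA rE]]]] := long #|A|.
have := subset_leq_card (introT subsetP sA).
by rewrite (card_uniqP ur) /= rE ltnNge leqnSn.
Qed.

Lemma connected_inD1_leaf A B l p b : leaf_in A l p -> B \subset A ->
  connected_in B -> b \in B -> b != l -> connected_in (B :\ l).
Proof.
move=> [lA pA lp lu] sBA [_ cB] bB bl.
split=> [|a c]; first by apply/set0Pn; exists b; rewrite !inE bl.
rewrite !inE => /andP[al aB] /andP[cl cB'].
have [q [aq cE uq]] := connect_uniq_path (cB _ _ aB cB').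
(* an inner l would have both of its path neighbours equal to p *)
have lq : l \notin a :: q.
  rewrite inE eq_sym (negbTE al) /=; apply/negP => lq.
  case/splitPr: lq aq cE uq => p1 p2 aq cE uq.
  case: p2 aq cE uq => [|z p2] aq cE uq.
    by move: cE; rewrite last_cat /= => cE; rewrite cE eqxx in cl.
  move: aq; rewrite cat_path => /andP[_ /= /and3P[/and3P[wl wB _] /and3P[lz _ zB] _]].
  have wp : last a p1 = p by apply: lu; [apply: (subsetP sBA) | rewrite adj_sym].
  have zp : z = p by apply: lu => //; apply: (subsetP sBA).
  move: uq; rewrite -cat_cons cat_uniq => /and3P[_ /hasPn/(_ z) + _].
  rewrite !inE eqxx orbT zp -wp => /(_ isT).
  by have := mem_last a p1; rewrite inE => ->.
apply/connectP; exists q => //.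
apply: (@sub_in_path _ [pred v | v != l]) aq.
  move=> u v; rewrite !inE => ul vl /and3P[uv uB vB].
  by rewrite /= uv !inE ul vl uB vB.
by apply/allP => v vq; rewrite inE; apply: contraNneq lq => <-.
Qed.

Lemma leaf_in_nbr A B l p b : leaf_in A l p -> B \subset A ->
  connected_in B -> l \in B -> b \in B -> b != l -> p \in B.
Proof.
move=> [_ _ _ lu] sBA [_ cB] lB bB bl.
case/connectP: (cB _ _ lB bB) => [[|z q] /= lq bE]; first by rewrite bE eqxx in bl.
case/andP: lq => /and3P[lz _ zB] _.
by rewrite -(lu z) // (subsetP sBA).
Qed.

Lemma meet_setD1_leaf A B C l p b c : leaf_in A l p ->
  B \subset A -> connected_in B -> b \in B -> b != l ->
  C \subset A -> connected_in C -> c \in C -> c != l ->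
  B :&: C != set0 -> (B :\ l) :&: (C :\ l) != set0.
Proof.
move=> leaf sBA cB bB bl sCA cC cC' cl /set0Pn[z /setIP[zB zC]].
apply/set0Pn; case: (eqVneq z l) => [zl | zl]; last first.
  by exists z; rewrite !inE zl zB zC.
have [_ _ lp _] := leaf.
have pl : p != l by rewrite eq_sym adj_neq.
rewrite zl in zB zC; exists p; rewrite !inE pl.
by rewrite (leaf_in_nbr leaf sBA cB zB bB bl) (leaf_in_nbr leaf sCA cC zC cC' cl).
Qed.

Lemma subtree_helly A (F : {set T} -> Prop) : acyclic -> connected_in A ->
  (forall B, F B -> B \subset A /\ connected_in B) ->
  (forall B C, F B -> F C -> B :&: C != set0) ->
  exists2 t, t \in A & forall B, F B -> t \in B.
Proof.
move=> acyT; have [n] := ubnP #|A|.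
elim: n A F => // n IH A F /ltnSE A_le_n cA sF meetF.
case: (leqP #|A| 1) => [A_le1 | A_gt1].
  have [a aA] := set0Pn _ cA.1.
  exists a => // B /sF[sBA [/set0Pn[b bB] _]].
  by have := card_le1P A_le1 a aA b; rewrite (subsetP sBA b bB) => /esym/eqP <-.
have [l [p leaf]] := leaf_exists acyT cA A_gt1.
have [lA pA lp _] := leaf.
have pl : p != l by rewrite eq_sym adj_neq.
case: (classic (exists2 B, F B & B \subset [set l])) => [[B FB sBl] | noB].
  exists l => // C FC; have /set0Pn[z /setIP[zB zC]] := meetF _ _ FB FC.
  by move: (subsetP sBl z zB); rewrite inE => /eqP <-.
have off_l B : F B -> exists2 b, b \in B & b != l.
  move=> FB; apply: NNPP => nob; apply: noB; exists B => //.
  apply/subsetP => b bB; rewrite inE; apply: NNPP => bl.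
  by apply: nob; exists b => //; apply/negP.
have [t tAl tF] : exists2 t, t \in A :\ l &
    forall B', (exists2 B, F B & B' = B :\ l) -> t \in B'.
  apply: IH.
  - by move: A_le_n; rewrite (cardsD1 l A) lA.
  - exact: connected_inD1_leaf leaf (subxx A) cA pA pl.
  - move=> _ [B FB ->]; have [sBA cB] := sF B FB; have [b bB bl] := off_l B FB.
    by split; [apply: setSD | apply: connected_inD1_leaf leaf sBA cB bB bl].
  - move=> _ _ [B FB ->] [C FC ->].
    have [[sBA cB] [sCA cC]] := (sF B FB, sF C FC).
    have [[b bB bl] [c cC' cl]] := (off_l B FB, off_l C FC).
    exact: meet_setD1_leaf leaf sBA cB bB bl sCA cC cC' cl (meetF _ _ FB FC).
exists t; first by move: tAl; rewrite inE => /andP[].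
by move=> B FB; have := tF _ (ex_intro2 _ _ B FB erefl); rewrite inE => /andP[].
Qed.

End SubtreeHelly.

Lemma uniq_cat3 (T : eqType) (P Q : pred T) (a b c : seq T) :
  (forall v, P v -> ~~ Q v) -> uniq a -> uniq b -> uniq c ->
  {subset a <= P} -> {subset c <= Q} -> all (fun v => ~~ P v && ~~ Q v) b ->
  uniq (a ++ b ++ c).
Proof.
move=> PQ ua ub uc aP cQ bPQ.
rewrite cat_uniq ua cat_uniq ub uc /= andbT; apply/andP; split.
  apply/hasPn => v; rewrite mem_cat => /orP[vb|vc].
    by apply/negP => /aP; move/allP: bPQ => /(_ v vb) /andP[/negP].
  by apply/negP => /aP /PQ /negP; apply; apply: cQ.
apply/hasPn => v vc; apply/negP => vb.
by move/allP: bPQ => /(_ v vb) /andP[_ /negP]; apply; apply: cQ.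
Qed.

Section LongestPaths.
Variable G : sgraph.
Implicit Types s : seq G.

Definition upath s := uniq s && sorted (@adj G) s.

Lemma is_gpathE s : is_gpath s = (s != [::]) && upath s.
Proof. by case: s. Qed.

Lemma gpath_mem s : is_gpath s -> exists a, a \in s.
Proof. by case: s => // a s _; exists a; rewrite mem_head. Qed.

Lemma upath_rev s : upath (rev s) = upath s.
Proof.
rewrite /upath rev_uniq rev_sorted; congr andb; apply: eq_sorted => u v /=.
exact: adj_sym.
Qed.

Lemma upath_cat s1 s2 : upath (s1 ++ s2) -> upath s1 /\ upath s2.
Proof.
rewrite /upath cat_uniq => /andP[/and3P[u1 _ u2] /cat_sorted2[s1' s2']].
by rewrite u1 u2 s1' s2'.
Qed.

Lemma upath_half s x : upath s -> x \in s -> exists s1,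
  [/\ upath (rcons s1 x), {subset rcons s1 x <= s} & size s < 2 * size (rcons s1 x)].
Proof.
move=> us xs; case/splitPr: xs us => p1 p2 us.
have [u1 _] : upath (rcons p1 x) /\ upath p2 by apply: upath_cat; rewrite cat_rcons.
have [_ u2] := upath_cat us.
case: (leqP (size p2) (size p1)) => p21.
  exists p1; split=> //; first by move=> v vp; rewrite -cat_rcons mem_cat vp.
  by rewrite size_cat /= size_rcons mul2n -addnn addSn ltnS leq_add2l.
exists (rev p2); split.
- by rewrite -rev_cons upath_rev.
- by move=> v; rewrite -rev_cons mem_rev => vp; rewrite mem_cat vp orbT.
- by rewrite size_cat /= size_rcons size_rev mul2n -addnn ltn_add2r ltnW.
Qed.

Lemma uniq_path_segment (P Q : pred G) : (forall v, P v -> ~~ Q v) ->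
  forall a s, P a -> path (@adj G) a s -> uniq (a :: s) -> Q (last a s) ->
  exists x m y, [/\ P x, Q y, path (@adj G) x (rcons m y),
    uniq (x :: rcons m y) & all (fun v => ~~ P v && ~~ Q v) m].
Proof.
move=> PQ; suff seg r a m0 : P a -> all (fun v => ~~ P v && ~~ Q v) m0 ->
    path (@adj G) a (m0 ++ r) -> uniq (a :: m0 ++ r) -> Q (last a (m0 ++ r)) ->
    exists x m y, [/\ P x, Q y, path (@adj G) x (rcons m y),
      uniq (x :: rcons m y) & all (fun v => ~~ P v && ~~ Q v) m].
  by move=> a s Pa; apply: (seg s a [::]).
elim: r a m0 => [|c r IH] a m0 Pa m0PQ am ua Ql.
  exfalso; move: Ql; rewrite cats0.
  have : last a m0 \in a :: m0 by apply: mem_last.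
  rewrite inE => /orP[/eqP ->|]; first by rewrite (negbTE (PQ a Pa)).
  by move/allP: m0PQ => m0PQ /m0PQ /andP[_ /negbTE ->].
case Qc: (Q c).
  exists a, m0, c; split=> //.
    by move: am; rewrite -cat_rcons cat_path => /andP[].
  by apply: subseq_uniq ua; rewrite -cat_rcons -cat_cons prefix_subseq.
case Pc: (P c).
  apply: (IH c [::]) => //.
  - by move: am; rewrite cat_path => /andP[_ /= /andP[]].
  - by move: ua; rewrite -cat_cons cat_uniq => /and3P[_ _].
  - by move: Ql; rewrite last_cat.
by apply: (IH a (rcons m0 c)); rewrite ?cat_rcons // all_rcons Pc Qc m0PQ.
Qed.

Lemma longest_paths_meet (P Q : seq G) : connected_graph G ->
  longest_path P -> longest_path Q -> exists2 v, v \in P & v \in Q.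
Proof.
move=> [_ cG] [gP longP] [gQ longQ]; apply: NNPP => noPQ.
have PQ v : v \in P -> v \notin Q by move=> vP; apply/negP => vQ; apply: noPQ; exists v.
have [[a aP] [b bQ]] := (gpath_mem gP, gpath_mem gQ).
move: (gP) (gQ); rewrite !is_gpathE => /andP[_ uP] /andP[_ uQ].
have [r [ar bE ur]] := connect_uniq_path (cG a b (in_setT a) (in_setT b)).
have [x [m [y [xP yQ xmy uxmy mPQ]]]] :
    exists x m y, [/\ x \in P, y \in Q, path (@adj G) x (rcons m y),
      uniq (x :: rcons m y) & all (fun v => ~~ (v \in P) && ~~ (v \in Q)) m].
  apply: (uniq_path_segment PQ aP _ ur); last by rewrite -bE.
  by apply: sub_path ar => u v /and3P[].
have [s1 [u1 sub1 size1]] := upath_half uP xP.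
have [s2 [u2 sub2 size2]] := upath_half uQ yQ.
pose F := rcons s1 x ++ m ++ rev (rcons s2 y).
have gF : is_gpath F.
  rewrite is_gpathE /F; apply/and3P; split; first by case: (s1).
    apply: (uniq_cat3 (P := fun v => v \in P) (Q := fun v => v \in Q)) => //.
    - by case/andP: u1.
    - by move: uxmy; rewrite cons_uniq rcons_uniq => /and3P[].
    - by rewrite rev_uniq; case/andP: u2.
    - by move=> v; rewrite mem_rev; apply: sub2.
  rewrite cat_rcons sorted_cat_cons rev_rcons; case/andP: u1 => _ -> /=.
  rewrite -cat_rcons cat_path xmy last_rcons /=.
  by move: u2; rewrite -upath_rev rev_rcons => /andP[].
move: (longP _ gF) (longP _ gQ) (longQ _ gP) size1 size2; rewrite /F !size_cat size_rev.
(* a closed goal over plain nat atoms keeps lia fast *)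
move: (size P) (size Q) (size (rcons s1 x)) (size m) (size (rcons s2 y)); clear; lia.
Qed.

End LongestPaths.

Section TreeDecompositionBags.
Variables (S T : sgraph) (X : T -> {set S}).
Hypothesis bag_cover : forall a : S, exists t, a \in X t.
Hypothesis bag_edge : forall a b : S, adj a b -> exists t, (a \in X t) && (b \in X t).
Hypothesis bag_subtree : forall a : S, connected_in [set t | a \in X t].

Definition bags_meeting (A : {set S}) : {set T} := [set t | X t :&: A != set0].

Lemma bags_meeting_connected A : connected_in A -> connected_in (bags_meeting A).
Proof.
move=> [nA cA].
have via_bag a t t' : a \in A -> a \in X t -> a \in X t' ->
    connect (adj_in (bags_meeting A)) t t'.
  move=> aA aXt aXt'; apply: connected_in_connect (bag_subtree a) _ _; rewrite ?inE //.
  by apply/subsetP => s; rewrite !inE => aXs; apply/set0Pn; exists a; rewrite inE aXs aA.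
split.
  have [a aA] := set0Pn _ nA; have [t aXt] := bag_cover a.
  by apply/set0Pn; exists t; rewrite inE; apply/set0Pn; exists a; rewrite inE aXt aA.
move=> t1 t2; rewrite !inE => /set0Pn[a1 /setIP[a1X a1A]] /set0Pn[a2 /setIP[a2X a2A]].
case/connectP: (cA _ _ a1A a2A) => q.
elim: q a1 t1 a1X a1A => [|b q IH] a t aXt aA /=.
  by move=> _ E; apply: (via_bag a) => //; rewrite -E.
move=> /andP[/and3P[ab _ bA] bq] E.
have [t0 /andP[aXt0 bXt0]] := bag_edge ab.
exact: connect_trans (via_bag _ _ _ aA aXt aXt0) (IH _ _ bXt0 bA bq E).
Qed.

End TreeDecompositionBags.

Lemma connected_bigcup_path (G S : sgraph) (Phi : G -> {set S}) v r :
  (forall v, connected_in (Phi v)) ->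
  (forall u w, adj u w -> Phi u :&: Phi w != set0) ->
  path (@adj G) v r -> connected_in (\bigcup_(w <- v :: r) Phi w).
Proof.
move=> cPhi meetPhi; elim: r v => [|w r IH] v /=.
  by rewrite big_cons big_nil setU0.
case/andP=> vw wr; rewrite big_cons.
have /set0Pn[a /setIP[av aw]] := meetPhi _ _ vw.
apply: connected_inU (cPhi v) (IH w wr) av _.
by rewrite big_cons inE aw.
Qed.

Theorem lemma4p1 (H G S T : sgraph) (Phi : G -> {set S}) (X : T -> {set S}) :
  connected_graph G -> H_profile H Phi X ->
  exists t : T, lp_transversal (\bigcup_(x in X t) Vx Phi x).
Proof.
move=> conG [[[_ cPhi adjPhi] _ _] [[conT acyT] bag_cover bag_edge bag_subtree]].
have meetPhi u w : adj u w -> Phi u :&: Phi w != set0.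
  by move=> uw; apply: (adjPhi u w (adj_neq uw)).1.
pose TP (P : seq G) := bags_meeting X (\bigcup_(v <- P) Phi v).
have [t _ tTP] : exists2 t, t \in [set: T] &
    forall B, (exists2 P, longest_path P & B = TP P) -> t \in B.
  apply: subtree_helly acyT conT _ _ => [_ [[|v r] [gP _] ->] | _ _ [P lP ->] [Q lQ ->]] //.
    split; first exact: subsetT.
    apply: bags_meeting_connected bag_cover bag_edge bag_subtree _ _.
    by apply: connected_bigcup_path cPhi meetPhi _; case/andP: gP.
  have [v vP vQ] := longest_paths_meet conG lP lQ.
  have [a av] := set0Pn _ (cPhi v).1; have [t aXt] := bag_cover a.
  have inTP R : v \in R -> t \in TP R.
    move=> vR; rewrite inE; apply/set0Pn; exists a.
    by rewrite inE aXt bigcup_seq; apply/bigcupP; exists v.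
  by apply/set0Pn; exists t; rewrite inE !inTP.
exists t => P lP; have := tTP _ (ex_intro2 _ _ P lP erefl).
rewrite inE bigcup_seq => /set0Pn[a /setIP[aXt /bigcupP[v vP av]]].
by apply/hasP; exists v => //; apply/bigcupP; exists a; rewrite ?inE.
Qed.
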